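(* Let $P$ be a Poisson tensor on $\mathbb{R}^3$, let $H\in C^\infty(\mathbb{R}^3)$, let $S\in C^\infty(\mathbb{R}^3)$ satisfy $PdS=0$, and let $g$ be the symmetric tensor with components $g^{ij}=H^iH^j-\delta^{ij}\sum_k H^kH^k$. Consider the system $\dot{x}=PdH+gdS$, along which the time derivative of $S$ at a point $x$ is $dS/dt=d_xS\cdot(P\,d_xH+g\,d_xS)$. If $x$ is a regular point of $P$ (i.e. $P(x)\neq0$) with $d_xS\neq 0$, then $dS/dt=0$ at $x$ if and only if $x$ is an equilibrium of this system.
   Context: $\mathbb{R}^3$ carries the standard Euclidean metric, used to identify tangent and cotangent spaces with $\mathbb{R}^3$ and to pair covectors with vectors (denoted by a dot); $H^i=H_i=\partial H/\partial x^i$. A Poisson tensor is a skew-symmetric bivector field satisfying the Jacobi identity. *)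

From HB Require Import structures.
From mathcomp Require Import all_boot all_order all_algebra.
From mathcomp Require Import all_classical all_reals all_analysis.
Set Implicit Arguments. Unset Strict Implicit. Unset Printing Implicit Defensive.
Import Order.TTheory GRing.Theory Num.Theory.
Import numFieldNormedType.Exports.
Local Open Scope ring_scope.

Section Defs.
Variable R : realType.
Notation V := 'rV[R]_3.

Definition evec (i : 'I_3) : V := delta_mx 0 i.

Definition partial (f : V -> R) (i : 'I_3) : V -> R :=
  fun x => derive f x (evec i).

Fixpoint Ck (k : nat) (f : V -> R) : Prop :=
  match k with
  | 0 => continuous f
  | k'.+1 => continuous f /\
      forall i : 'I_3, (forall x, derivable f x (evec i)) /\ Ck k' (partial f i)
  end.

Definition smooth (f : V -> R) : Prop := forall k, Ck k f.

Definition grad (f : V -> R) (x : V) : V := \row_i partial f i x.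

Definition poisson_tensor (P : V -> 'M[R]_3) : Prop :=
  (forall i j : 'I_3, smooth (fun x => P x i j)) /\
  (forall x (i j : 'I_3), P x i j = - P x j i) /\
  (forall x (i j k : 'I_3),
     \sum_(l < 3) (P x i l * partial (fun y => P y j k) l x
                 + P x j l * partial (fun y => P y k i) l x
                 + P x k l * partial (fun y => P y i j) l x) = 0).

Definition gten (H : V -> R) (x : V) : 'M[R]_3 :=
  \matrix_(i, j) (grad H x 0 i * grad H x 0 j
                  - (i == j)%:R * \sum_(k < 3) grad H x 0 k * grad H x 0 k).

Definition vfield (P : V -> 'M[R]_3) (H S : V -> R) (x : V) : V :=
  \row_i (\sum_(j < 3) P x i j * grad H x 0 j
          + \sum_(j < 3) gten H x i j * grad S x 0 j).

Definition dSdt (P : V -> 'M[R]_3) (H S : V -> R) (x : V) : R :=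
  \sum_(i < 3) grad S x 0 i * vfield P H S x 0 i.

End Defs.

(* Skew-symmetry of [P] together with [P dS = 0] makes the Poisson part invisible
   to [dS], and [dS . g dS = (dH . dS)^2 - |dH|^2 |dS|^2].  Hence [dS/dt = 0] is the
   equality case of Cauchy-Schwarz, [dH = l dS], and then both [P dH = l P dS] and
   [g dS = (dH . dS) dH - |dH|^2 dS] vanish.  The argument works in any dimension. *)
From HB Require Import structures.
From mathcomp Require Import all_boot all_order all_algebra.
From mathcomp Require Import all_classical all_reals all_analysis.
From mathcomp Require Import ring.
Import Order.TTheory GRing.Theory Num.Theory.
Set Implicit Arguments. Unset Strict Implicit. Unset Printing Implicit Defensive.
Local Open Scope ring_scope.

Section DotProduct.
Variables (R : realFieldType) (n : nat).
Implicit Types (u v w : 'rV[R]_n) (a : R).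

Definition dotmx u v : R := (u *m v^T) 0 0.

Lemma dotmxE u v : dotmx u v = \sum_i u 0 i * v 0 i.
Proof. by rewrite /dotmx mxE; apply: eq_bigr => i _; rewrite mxE. Qed.

Lemma dotmxC u v : dotmx u v = dotmx v u.
Proof. by rewrite !dotmxE; apply: eq_bigr => i _; rewrite mulrC. Qed.

Lemma dotmxDl u v w : dotmx (u + v) w = dotmx u w + dotmx v w.
Proof. by rewrite /dotmx mulmxDl mxE. Qed.

Lemma dotmxZl a u v : dotmx (a *: u) v = a * dotmx u v.
Proof. by rewrite /dotmx -scalemxAl mxE. Qed.

Lemma dotmxNl u v : dotmx (- u) v = - dotmx u v.
Proof. by rewrite -scaleN1r dotmxZl mulN1r. Qed.

Lemma dotmxZr a u v : dotmx u (a *: v) = a * dotmx u v.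
Proof. by rewrite dotmxC dotmxZl dotmxC. Qed.

Lemma dotmxDr u v w : dotmx u (v + w) = dotmx u v + dotmx u w.
Proof. by rewrite dotmxC dotmxDl !(dotmxC u). Qed.

Lemma dotmxNr u v : dotmx u (- v) = - dotmx u v.
Proof. by rewrite dotmxC dotmxNl dotmxC. Qed.

Lemma dotmx0r u : dotmx u 0 = 0.
Proof. by rewrite -(scale0r 0) dotmxZr mul0r. Qed.

Lemma dotmx_eq0 u : (dotmx u u == 0) = (u == 0).
Proof.
apply/eqP/eqP => [uu0|->]; last by rewrite dotmx0r.
apply/rowP => i; rewrite mxE; apply/eqP; rewrite -sqrf_eq0; apply/eqP.
by move: uu0; rewrite dotmxE => /psumr_eq0P; apply=> // j _; exact: sqr_ge0.
Qed.

(* |(v.v) u - (u.v) v|^2 = (v.v) ((u.u)(v.v) - (u.v)^2) *)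
Lemma dotmx_sqr_eq_collinear u v : v != 0 ->
  dotmx u v ^+ 2 = dotmx u u * dotmx v v -> u = (dotmx u v / dotmx v v) *: v.
Proof.
move=> v_neq0 equality_case.
have vv_neq0 : dotmx v v != 0 by rewrite dotmx_eq0.
set w := dotmx v v *: u - dotmx u v *: v.
have ww : dotmx w w = dotmx v v * (dotmx u u * dotmx v v - dotmx u v ^+ 2).
  rewrite /w !(dotmxDl, dotmxDr, dotmxNl, dotmxNr, dotmxZl, dotmxZr) (dotmxC v u).
  ring.
have /eqP : w = 0 by apply/eqP; rewrite -dotmx_eq0 ww equality_case subrr mulr0.
rewrite subr_eq0 => /eqP/(congr1 (fun z => (dotmx v v)^-1 *: z)).
by rewrite !scalerA mulVf // scale1r mulrC.
Qed.

End DotProduct.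

Section MetriplecticField.
Variables (R : realFieldType) (n : nat).
Implicit Types (h s : 'rV[R]_n) (A : 'M[R]_n).

(* With row vectors, [s *m A^T] is the vector [A s]. *)
Lemma mul_row_trmxE A s i : (s *m A^T) 0 i = \sum_j A i j * s 0 j.
Proof. by rewrite mxE; apply: eq_bigr => j _; rewrite mxE mulrC. Qed.

Definition metric_mx h : 'M[R]_n := h^T *m h - (dotmx h h)%:M.

Lemma mul_metric_mx s h : s *m (metric_mx h)^T = dotmx s h *: h - dotmx h h *: s.
Proof.
rewrite /metric_mx linearB /= trmx_mul trmxK tr_scalar_mx mulmxBr mulmxA.
by rewrite [s *m h^T]mx11_scalar mul_scalar_mx mul_mx_scalar.
Qed.

Definition metriplectic_field A h s : 'rV[R]_n := h *m A^T + s *m (metric_mx h)^T.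

Lemma dotmx_skew A h s : A^T = - A -> dotmx s (h *m A^T) = - dotmx h (s *m A^T).
Proof.
move=> skewA; have sA : s *m A = - (s *m A^T) by rewrite skewA mulmxN opprK.
rewrite /dotmx trmx_mul trmxK mulmxA sA mulNmx [LHS]mxE.
by rewrite -/(dotmx (s *m A^T) h) dotmxC.
Qed.

Lemma dotmx_metriplectic_field A h s : A^T = - A -> s *m A^T = 0 ->
  dotmx s (metriplectic_field A h s) = dotmx s h ^+ 2 - dotmx h h * dotmx s s.
Proof.
move=> skewA As0; rewrite /metriplectic_field mul_metric_mx !(dotmxDr, dotmxNr, dotmxZr).
by rewrite dotmx_skew // As0 dotmx0r (dotmxC s h); ring.
Qed.

Lemma metriplectic_field_collinear A a s : s *m A^T = 0 ->
  metriplectic_field A (a *: s) s = 0.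
Proof.
move=> As0; rewrite /metriplectic_field mul_metric_mx -scalemxAl As0 scaler0 add0r.
apply/eqP; rewrite !(dotmxZl, dotmxZr) scalerA subr_eq0; apply/eqP.
by congr (_ *: _); ring.
Qed.

Theorem dotmx_metriplectic_field_eq0 A h s : A^T = - A -> s *m A^T = 0 -> s != 0 ->
  dotmx s (metriplectic_field A h s) = 0 <-> metriplectic_field A h s = 0.
Proof.
move=> skewA As0 s_neq0; split=> [dS0|->]; last exact: dotmx0r.
have /dotmx_sqr_eq_collinear -> // : dotmx h s ^+ 2 = dotmx h h * dotmx s s.
  by apply/eqP; rewrite -subr_eq0 dotmxC -dS0 dotmx_metriplectic_field.
exact: metriplectic_field_collinear.
Qed.

End MetriplecticField.

Section PoissonSystem.
Variables (R : realType) (P : 'rV[R]_3 -> 'M[R]_3) (H S : 'rV[R]_3 -> R).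

Lemma gtenE x : gten H x = metric_mx (grad H x).
Proof.
by apply/matrixP => i j; rewrite !mxE big_ord1 !mxE dotmxE mulr_natl.
Qed.

Lemma vfieldE x : vfield P H S x = metriplectic_field (P x) (grad H x) (grad S x).
Proof.
by apply/rowP => i; rewrite mxE [RHS]mxE !mul_row_trmxE gtenE.
Qed.

Lemma dSdtE x : dSdt P H S x = dotmx (grad S x) (vfield P H S x).
Proof. by rewrite dotmxE. Qed.

Lemma poisson_tensor_skew x : poisson_tensor P -> (P x)^T = - P x.
Proof. by move=> [_ [skewP _]]; apply/matrixP => i j; rewrite !mxE skewP. Qed.

End PoissonSystem.

Theorem mainTheorem8 (R : realType) (P : 'rV[R]_3 -> 'M[R]_3) (H S : 'rV[R]_3 -> R) :
  poisson_tensor P -> smooth H -> smooth S ->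
  (forall (x : 'rV[R]_3) (i : 'I_3), \sum_(j < 3) P x i j * grad S x 0 j = 0) ->
  forall x : 'rV[R]_3, P x != 0 -> grad S x != 0 ->
  (dSdt P H S x = 0 <-> vfield P H S x = 0).
Proof.
move=> poissonP _ _ casimirS x _ dS_neq0.
have PdS0 : grad S x *m (P x)^T = 0.
  by apply/rowP => i; rewrite mul_row_trmxE casimirS mxE.
rewrite dSdtE vfieldE.
by apply: dotmx_metriplectic_field_eq0 PdS0 dS_neq0; exact: poisson_tensor_skew.
Qed.
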